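(* Let $n \ge m \ge 2$ and let $K_{n,m}$ be the complete bipartite graph with bipartition $(X,Y)$, $|X|=n$, $|Y|=m$. If $U$ is a strong edge geodetic set of $K_{n,m}$, then $X \subseteq U$ or $Y \subseteq U$.
   Context: All graphs are finite, simple and connected. A set $S \subseteq V(G)$ is a strong edge geodetic set of $G$ if one can assign to every unordered pair $\{u,v\}$ of distinct vertices of $S$ either one shortest $u,v$-path $P_{uv}$ in $G$ or no path, in such a way that every edge of $G$ lies on at least one of the assigned paths. *)

From mathcomp Require Import all_boot.
Set Implicit Arguments. Unset Strict Implicit. Unset Printing Implicit Defensive.

(* Simple graph given by an (assumed symmetric, irreflexive) relation e on a finType T.
   A walk from u is a sequence p with path e u p; it ends at last u p and has length size p. *)

Definition shortest_path (T : finType) (e : rel T) (u v : T) (p : seq T) : Prop :=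
  [/\ path e u p, last u p = v &
      forall q : seq T, path e u q -> last u q = v -> size p <= size q].

Definition edge_on (T : finType) (u : T) (p : seq T) (a b : T) : bool :=
  ((a, b) \in zip (u :: p) p) || ((b, a) \in zip (u :: p) p).

(* Strong edge geodetic set: to each unordered pair {u,v} of distinct vertices of S
   (represented by the ordered pair with enum_rank u < enum_rank v) we assign
   either one shortest u,v-path or none, such that every edge lies on some assigned path. *)
Definition strong_edge_geodetic (T : finType) (e : rel T) (S : {set T}) : Prop :=
  exists f : T -> T -> option (seq T),
    (forall u v p, u \in S -> v \in S -> (enum_rank u < enum_rank v)%N ->
        f u v = Some p -> shortest_path e u v p) /\
    (forall a b, e a b -> exists u v p,
        [/\ u \in S, v \in S, (enum_rank u < enum_rank v)%N,
            f u v = Some p & edge_on u p a b]).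

Definition Kbip_rel (n m : nat) : rel ('I_n + 'I_m) :=
  fun x y => is_inl x != is_inl y.
Definition Kbip_X (n m : nat) : {set 'I_n + 'I_m} := [set x | is_inl x].
Definition Kbip_Y (n m : nat) : {set 'I_n + 'I_m} := [set x | ~~ is_inl x].

From mathcomp Require Import all_boot.

Set Implicit Arguments.
Unset Strict Implicit.

(* A strong edge geodetic set covers each edge by a shortest path between two
   of its vertices.  In a graph of diameter at most 2 such a path has at most
   two edges, so every edge on it meets one of its two ends.  Hence every edge
   has an endpoint in the set.  In K_{n,m}, a vertex of X and a vertex of Y
   outside U would span an edge missing U; so U contains X or Y. *)

Section DiameterTwo.

Variables (T : finType) (e : rel T).

Definition diameter_le2 : Prop :=
  forall u v : T, exists2 q : seq T, path e u q & last u q = v /\ (size q <= 2)%N.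

Lemma edge_on_walk_le2 (u : T) (p : seq T) (a b : T) :
  (size p <= 2)%N -> edge_on u p a b ->
  [|| a == u, a == last u p, b == u | b == last u p].
Proof.
rewrite /edge_on; case: p => [|c [|d [|? ?]]] //= _; rewrite !inE !xpair_eqE.
all: by do ![case/orP] => /andP[/eqP-> /eqP->]; rewrite !eqxx ?orbT.
Qed.

Lemma shortest_path_size_le2 (u v : T) (p : seq T) :
  diameter_le2 -> shortest_path e u v p -> (size p <= 2)%N.
Proof.
move=> diam [_ _ minp]; have [q wq [lq szq]] := diam u v.
exact: leq_trans (minp q wq lq) szq.
Qed.

Lemma strong_edge_geodetic_edge_meets (S : {set T}) (a b : T) :
  diameter_le2 -> strong_edge_geodetic e S -> e a b -> (a \in S) || (b \in S).
Proof.
move=> diam [f [f_shortest f_covers]] eab.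
have [u [v [p [uS vS ltuv fuv on_p]]]] := f_covers a b eab.
have sp := f_shortest u v p uS vS ltuv fuv.
have [_ lastp _] := sp.
have := edge_on_walk_le2 (shortest_path_size_le2 diam sp) on_p.
by rewrite lastp => /or4P[] /eqP->; rewrite ?uS ?vS ?orbT.
Qed.

End DiameterTwo.

Lemma Kbip_diameter_le2 (n m : nat) (x y : 'I_n + 'I_m) :
  x \in Kbip_X n m -> y \in Kbip_Y n m -> diameter_le2 (@Kbip_rel n m).
Proof.
rewrite !inE => Xx Yy u v.
case: (boolP (is_inl u == is_inl v)) => [/eqP uv | nuv]; last first.
  by exists [:: v]; rewrite //= /Kbip_rel nuv.
exists [:: if is_inl u then y else x; v] => //=.
by rewrite /Kbip_rel -uv; case: (is_inl u); rewrite ?Xx ?(negbTE Yy).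
Qed.

Unset Implicit Arguments.

Theorem mainTheorem2 (n m : nat) (U : {set 'I_n + 'I_m}) :
  (2 <= m)%N -> (m <= n)%N ->
  strong_edge_geodetic (@Kbip_rel n m) U ->
  (Kbip_X n m \subset U) \/ (Kbip_Y n m \subset U).
Proof.
move=> _ _ sU.
have [XU | /subsetPn [x Xx xU]] := boolP (Kbip_X n m \subset U); first by left.
have [YU | /subsetPn [y Yy yU]] := boolP (Kbip_Y n m \subset U); first by right.
have exy : Kbip_rel x y by move: Xx Yy; rewrite /Kbip_rel !inE => -> ->.
have := strong_edge_geodetic_edge_meets (Kbip_diameter_le2 Xx Yy) sU exy.
by rewrite (negbTE xU) (negbTE yU).
Qed.
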